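(* For every finite chain ring $R$ and every $k\ge1$, the linear simplex code $\mathcal{S}_k^\alpha$ is not optimal with respect to the Griesmer bound, i.e., its length $n$ satisfies $n>\sum_{i=0}^{k(\mathcal{S}_k^\alpha)-1}\left\lceil\frac{d_H(\mathcal{S}_k^\alpha)}{q^i}\right\rceil$.
   Context: Let $R$ be a finite commutative chain ring with maximal ideal $\langle\gamma\rangle$, nilpotency index $s$ and residue field $R/\langle\gamma\rangle\cong\mathbb{F}_q$. Fix coset representatives $T=\{e_0,\dots,e_{q-1}\}$ with $e_0=0,e_1=1$, ordered $e_0<\dots<e_{q-1}$; each $r\in R$ is uniquely $\sum_{i=0}^{s-1}r_i\gamma^i$, $r_i\in T$; order $R$ by $x>y$ iff $x_i>y_i$ in $T$ for the largest $i$ with $x_i\neq y_i$; list $R=\{\rho_0,\dots,\rho_{q^s-1}\}$ increasingly. $\mathbf{a}^{(m)}$ is the constant vector of length $m$. Define $G_1^\alpha=(\rho_0\ \cdots\ \rho_{q^s-1})$ and, for $k>1$, $G_k^\alpha$ as the $k\times q^{sk}$ matrix of $q^s$ column blocks, the $j$-th having first row $\boldsymbol{\rho_j}^{(q^{s(k-1)})}$ and $G_{k-1}^\alpha$ below. $\mathcal{S}_k^\alpha$ is the $R$-submodule of $R^{q^{sk}}$ generated by the rows of $G_k^\alpha$. For a linear code $\mathcal{C}\subseteq R^n$, $d_H(\mathcal{C})$ is its minimum Hamming distance and $k(\mathcal{C})$ is the minimum rank of a free $R$-submodule $\mathcal{C}'\subseteq R^n$ with $\mathcal{C}\subseteq\mathcal{C}'$.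 The Griesmer bound states $n\ge\sum_{i=0}^{k(\mathcal{C})-1}\lceil d_H(\mathcal{C})/q^i\rceil$; a code is optimal with respect to it when equality holds. *)

From HB Require Import structures.
From mathcomp Require Import all_boot all_order all_algebra.
Set Implicit Arguments. Unset Strict Implicit. Unset Printing Implicit Defensive.
Import GRing.Theory.
Local Open Scope ring_scope.

Section ChainRing.
Variable R : finComUnitRingType.

Definition is_ideal (I : {set R}) : Prop :=
  [/\ 0 \in I, (forall x y, x \in I -> y \in I -> x + y \in I)
    & (forall r x, x \in I -> r * x \in I)].

Definition gen_ideal (g : R) : {set R} := [set g * x | x : R].

Definition is_maximal_ideal (M : {set R}) : Prop :=
  [/\ is_ideal M, M != [set: R]
    & forall J, is_ideal J -> M \subset J -> J = M \/ J = [set: R]].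

Definition is_chain_ring : Prop :=
  forall I J, is_ideal I -> is_ideal J -> I \subset J \/ J \subset I.

Definition nilpotency_index (g : R) (s : nat) : Prop :=
  g ^+ s = 0 /\ forall i, (i < s)%N -> g ^+ i != 0.

(* T = [e_0; ...; e_(q-1)] is a complete set of coset representatives of R/<g>
   (so the residue field has q elements); the order e_0 < ... < e_(q-1)
   is the order of the list. *)
Definition coset_representatives (g : R) (q : nat) (T : seq R) : Prop :=
  size T = q /\
  forall x : R, exists! i : 'I_q, x - nth 0 T i \in gen_ideal g.

(* rho_j, the j-th element of R in the increasing order of the paper:
   the element whose gamma-adic digits (r_0,...,r_(s-1)) satisfy
   r_i = e_(d_i), where d_i is the i-th base-q digit of j. *)
Definition rho (g : R) (q s : nat) (T : seq R) (j : nat) : R :=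
  \sum_(i < s) nth 0 T ((j %/ q ^ i) %% q) * g ^+ i.

(* rows of G_k^alpha, following the recursive block definition; N = q^s *)
Fixpoint simplex_rows (f : nat -> R) (N k : nat) : seq (seq R) :=
  match k with
  | 0 => [::]
  | 1 => [:: [seq f j | j <- iota 0 N]]
  | k'.+1 =>
      flatten [seq nseq (N ^ k') (f j) | j <- iota 0 N]
        :: [seq flatten (nseq N r) | r <- simplex_rows f N k']
  end.

Definition simplex_matrix (g : R) (q s : nat) (T : seq R) (k : nat)
  : 'M[R]_(k, q ^ (s * k)) :=
  \matrix_(i < k, c < q ^ (s * k))
     nth 0 (nth [::] (simplex_rows (rho g q s T) (q ^ s) k) i) c.

Definition simplex_code (g : R) (q s : nat) (T : seq R) (k : nat)
  : {set 'rV[R]_(q ^ (s * k))} :=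
  [set v | [exists a : 'rV[R]_k, v == a *m simplex_matrix g q s T k]].

Section Codes.
Variable n : nat.

Definition hamming_dist (u v : 'rV[R]_n) : nat :=
  #|[set i : 'I_n | u 0 i != v 0 i]|.

(* minimum Hamming distance between distinct codewords (n if none) *)
Definition min_dist (C : {set 'rV[R]_n}) : nat :=
  \big[minn/n]_(u in C) \big[minn/n]_(v in C | v != u) hamming_dist u v.

(* C is contained in a free submodule of R^n of rank r, i.e. in the span of
   r R-linearly independent vectors (the rows of B) *)
Definition free_cover (C : {set 'rV[R]_n}) (r : nat) : bool :=
  [exists B : 'M[R]_(r, n),
     [forall a : 'rV[R]_r, (a *m B == 0) ==> (a == 0)] &&
     [forall v in C, [exists a : 'rV[R]_r, v == a *m B]]].

Lemma free_cover_ex (C : {set 'rV[R]_n}) : exists r, free_cover C r.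
Proof.
exists n; apply/existsP; exists 1%:M; apply/andP; split.
  by apply/forallP => a; rewrite mulmx1; apply/implyP.
by apply/forall_inP => v _; apply/existsP; exists v; rewrite mulmx1.
Qed.

Definition code_rank (C : {set 'rV[R]_n}) : nat := ex_minn (free_cover_ex C).

End Codes.
End ChainRing.

(* The k rows of G_k^alpha are R-linearly independent, since row i is the only
   one with a nonzero entry in column (q^s)^(k-1-i), where it equals rho_1 = 1;
   hence k(S_k^alpha) <= k <= sk.  Multiplying the last row by gamma^(s-1) kills
   every gamma-adic digit of rho_j except the lowest one, so the c-th entry of
   this codeword is e_(c mod q) gamma^(s-1): it is nonzero but vanishes on the
   multiples of q, whence d <= q^(sk) - q^(sk-1).  Writing n = q^(e+1), the
   bounds d <= q^e (q-1) and r <= e+1 give a Griesmer sum of at most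
   sum_(i<r) q^(e-i) (q-1) = n - q^(e+1-r) < n. *)

From HB Require Import structures.
From mathcomp Require Import all_boot all_order all_algebra.
Import Order.TTheory GRing.Theory.

Set Implicit Arguments.
Unset Strict Implicit.
Unset Printing Implicit Defensive.

Lemma leq_ceil_div d m b : 0 < b -> d <= m * b -> (d + b - 1) %/ b <= m.
Proof.
move=> b_gt0 le_dmb; rewrite -addnBA // -ltnS -(ltn_pmul2r b_gt0).
apply: leq_ltn_trans (leq_divM _ _) _.
by rewrite mulSn -addnS subn1 prednK // addnC leq_add2l.
Qed.

Lemma sum_expn_pred_telescope q e r : 0 < q -> r <= e.+1 ->
  \sum_(i < r) q ^ (e - i) * (q - 1) + q ^ (e.+1 - r) = q ^ e.+1.
Proof.
move=> q_gt0; elim: r => [|r IHr] le_re; first by rewrite big_ord0 subn0.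
rewrite big_ord_recr /= -addnA subSS -mulnSr subn1 prednK // -expnSr -subSn //.
by rewrite -subn1 IHr // ltnW.
Qed.

Lemma griesmer_sum_lt q e r d : 1 < q -> r <= e.+1 -> d <= q ^ e * (q - 1) ->
  \sum_(i < r) ((d + q ^ i - 1) %/ q ^ i) < q ^ e.+1.
Proof.
move=> q_gt1 le_re le_d; have q_gt0 := ltnW q_gt1.
rewrite -(sum_expn_pred_telescope q_gt0 le_re) -addn1.
rewrite leq_add ?expn_gt0 ?q_gt0 //.
apply: leq_sum => i _; apply: leq_ceil_div; first by rewrite expn_gt0 q_gt0.
have le_ie : i <= e by rewrite -ltnS (leq_trans _ le_re).
by rewrite mulnAC -expnD subnK.
Qed.

Lemma expn_div_modn N a b : 1 < N -> N ^ a %/ N ^ b %% N = (a == b).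
Proof.
move=> N_gt1; have N_gt0 := ltnW N_gt1.
case: ltngtP => [lt_ab | lt_ba | ->].
- by rewrite divn_small ?mod0n // ltn_exp2l.
- rewrite -(subnK (ltnW lt_ba)) expnD mulnK ?expn_gt0 ?N_gt0 //.
  by rewrite -(prednK (_ : 0 < a - b)) ?subn_gt0 // expnS modnMr.
- by rewrite divnn expn_gt0 N_gt0 modn_small.
Qed.

Section FlattenConstSize.
Variables (T : Type) (x0 : T) (m : nat).
Implicit Type ss : seq (seq T).

Lemma size_flatten_const ss : all [pred s | size s == m] ss ->
  size (flatten ss) = size ss * m.
Proof.
elim: ss => //= s ss IHss /andP[/eqP sz_s /IHss].
by rewrite size_cat sz_s => ->.
Qed.

Lemma nth_flatten_const ss c : 0 < m -> all [pred s | size s == m] ss ->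
  nth x0 (flatten ss) c = nth x0 (nth [::] ss (c %/ m)) (c %% m).
Proof.
move=> m_gt0; elim: ss c => [|s ss IHss] c /=; first by rewrite !nth_nil.
case/andP=> /eqP sz_s /IHss {}IHss; rewrite nth_cat sz_s.
have [lt_cm | le_mc] := ltnP c m; first by rewrite divn_small ?modn_small.
rewrite IHss -[in RHS](subnK le_mc) -[X in _ + X]mul1n divnDMl // mul1n modnDr.
by rewrite addn1.
Qed.
End FlattenConstSize.

Section SimplexRows.
Variables (R : finComUnitRingType) (f : nat -> R) (N : nat).

Lemma size_simplex_rows k : size (simplex_rows f N k) = k.
Proof.
by elim: k => [|[|k] IHk] //=; rewrite size_map in IHk *; rewrite IHk.
Qed.

Lemma simplex_rows_const_size k :
  all [pred r | size r == N ^ k] (simplex_rows f N k).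
Proof.
elim: k => [|[|k] IHk] //=; first by rewrite size_map size_iota expn1 eqxx.
rewrite (size_flatten_const (m := N ^ k.+1)); last first.
  by apply/allP => _ /mapP[j _ ->]; rewrite /= size_nseq.
rewrite size_map size_iota -expnS eqxx /=.
apply/allP => _ /mapP[r /(allP IHk) /eqP sz_r ->] /=.
rewrite (size_flatten_const (m := size r)) ?size_nseq ?sz_r -?expnS //.
by rewrite all_nseq /= sz_r eqxx orbT.
Qed.

Lemma nth_simplex_rows k i c : 0 < N -> i < k -> c < N ^ k ->
  nth 0%R (nth [::] (simplex_rows f N k) i) c = f (c %/ N ^ (k.-1 - i) %% N).
Proof.
move=> N_gt0; elim: k i c => [|[|k] IHk] i c //.
  case: i => // _ /=; rewrite expn1 => lt_cN.
  by rewrite (nth_map 0) ?size_iota // nth_iota // divn1 modn_small.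
have Nk_gt0 : 0 < N ^ k.+1 by rewrite expn_gt0 N_gt0.
move=> lt_ik; rewrite expnS -ltn_divLR // => lt_cN.
case: i lt_ik => [_ | i lt_ik] /=.
  rewrite (nth_flatten_const _ _ Nk_gt0); last first.
    by apply/allP => _ /mapP[j _ ->]; rewrite /= size_nseq.
  rewrite (nth_map 0%N) ?size_iota // nth_iota // nth_nseq ltn_mod Nk_gt0.
  by rewrite subn0 modn_small.
have lt_i : i < size (simplex_rows f N k.+1) by rewrite size_simplex_rows.
have /eqP sz_i := allP (simplex_rows_const_size k.+1) _ (mem_nth [::] lt_i).
rewrite (nth_map [::] _ _ lt_i) (nth_flatten_const _ _ Nk_gt0); last first.
  by rewrite all_nseq /= sz_i eqxx orbT.
rewrite nth_nseq lt_cN IHk ?ltn_mod //= subSS.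
have -> : N ^ k.+1 = N ^ i.+1 * N ^ (k - i) by rewrite -expnD addSn subnKC.
by rewrite -modn_divl modn_dvdm // dvdn_exp.
Qed.
End SimplexRows.

Local Open Scope ring_scope.

Lemma mulmx_unit_columns_eq0 (R : pzRingType) m n (G : 'M[R]_(m, n)) :
  (forall i, exists c, forall j, G j c = (i == j)%:R) ->
  forall a : 'rV_m, a *m G = 0 -> a = 0.
Proof.
move=> unit_col a aG0; apply/rowP => i; have [c Gc] := unit_col i.
have := congr1 (fun M : 'rV_n => M 0 c) aG0; rewrite !mxE (bigD1 i) //= Gc eqxx.
rewrite mulr1 big1 ?addr0 // => j /negbTE ji.
by rewrite Gc eq_sym ji mulr0.
Qed.

Section CodeBounds.
Variables (R : finComUnitRingType) (n : nat).
Implicit Type C : {set 'rV[R]_n}.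

Lemma code_rank_le C r : free_cover C r -> (code_rank C <= r)%N.
Proof. by rewrite /code_rank; case: ex_minnP => r' _ min_r /min_r. Qed.

Lemma free_cover_span m (G : 'M[R]_(m, n)) :
  (forall a : 'rV_m, a *m G = 0 -> a = 0) ->
  free_cover [set v | [exists a : 'rV_m, v == a *m G]] m.
Proof.
move=> G_free; apply/existsP; exists G; apply/andP; split.
  by apply/forallP => a; apply/implyP => /eqP/G_free->.
by apply/forall_inP => v; rewrite inE.
Qed.

Lemma min_dist_le C u v : u \in C -> v \in C -> v != u ->
  (min_dist C <= hamming_dist u v)%N.
Proof.
move=> uC vC vu; rewrite /min_dist -minEnat -leEnat.
apply: le_trans (bigmin_le_cond _ _ uC) _.
by apply: bigmin_le_cond; rewrite vC.
Qed.

Lemma hamming_dist0_le q (v : 'rV[R]_n) : (0 < q)%N ->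
  (forall c : 'I_n, (q %| c)%N -> v 0 c = 0) ->
  (hamming_dist v 0 <= n - n %/ q)%N.
Proof.
move=> q_gt0 v_mul0.
have lt_mul_q (j : 'I_(n %/ q)) : (j * q < n)%N.
  have := ltn_ord j; rewrite leq_divRL // mulSnr; apply: leq_trans.
  by rewrite -addn1 leq_add2l.
pose mul_q j := Ordinal (lt_mul_q j).
have mul_q_inj : injective mul_q.
  move=> j j' /(congr1 val)/eqP; rewrite /= eqn_mul2r eqn0Ngt q_gt0.
  by move=> /eqP/val_inj.
have card_mul_q : #|mul_q @: [set: 'I_(n %/ q)]| = (n %/ q)%N.
  by rewrite card_imset // cardsT card_ord.
rewrite /hamming_dist -[n in (_ <= n - _)%N](card_ord n).
rewrite -(cardsC (mul_q @: setT)) card_mul_q addKn.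
apply/subset_leq_card/subsetP => c; rewrite !inE mxE; apply: contra.
by case/imsetP=> j _ ->; rewrite v_mul0 ?dvdn_mull.
Qed.
End CodeBounds.

Section SimplexCode.
Variables (R : finComUnitRingType) (gamma : R) (q s : nat) (T : seq R).
Hypotheses (q_gt1 : (1 < q)%N) (s_gt0 : (0 < s)%N).
Hypotheses (gamma_s : gamma ^+ s = 0) (gamma_pred_s : gamma ^+ s.-1 != 0).
Hypotheses (T0 : nth 0 T 0 = 0) (T1 : nth 0 T 1 = 1).

Local Notation rho_ := (rho gamma q s T).
Local Notation N := (q ^ s)%N.
Local Notation G := (simplex_matrix gamma q s T).

Lemma rho0 : rho_ 0 = 0.
Proof. by rewrite /rho big1 // => i _; rewrite div0n mod0n T0 mul0r. Qed.

Lemma rho1 : rho_ 1 = 1.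
Proof.
rewrite /rho -(prednK s_gt0) big_ord_recl /= divn1 modn_small // T1 mulr1.
rewrite big1 ?addr0 // => i _; rewrite divn_small ?mod0n ?T0 ?mul0r //.
exact: leq_ltn_trans (ltn0Sn i) (ltn_expl _ q_gt1).
Qed.

Lemma mul_exp_pred_rho j :
  gamma ^+ s.-1 * rho_ j = nth 0 T (j %% q) * gamma ^+ s.-1.
Proof.
rewrite /rho -{-1}(prednK s_gt0) big_ord_recl /=.
rewrite divn1 expr0 mulr1 mulrDr mulr_sumr big1 ?addr0 1?mulrC // => i _.
rewrite mulrCA -exprD /bump /= add1n addnS -addSn prednK //.
by rewrite exprD gamma_s mul0r mulr0.
Qed.

Let N_gt1 : (1 < N)%N := leq_ltn_trans s_gt0 (ltn_expl _ q_gt1).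

Lemma simplex_matrixE k (i : 'I_k) (c : 'I_(q ^ (s * k))) :
  G k i c = rho_ (c %/ N ^ (k.-1 - i) %% N).
Proof. by rewrite mxE nth_simplex_rows // -?expnM // ltnW // N_gt1. Qed.

Lemma simplex_matrix_unit_column k (i : 'I_k) :
  exists c, forall j, G k j c = (i == j)%:R.
Proof.
have k_gt0 : (0 < k)%N by apply: leq_ltn_trans (ltn_ord i).
have lt_c : (N ^ (k.-1 - i) < q ^ (s * k))%N.
  rewrite expnM ltn_exp2l ?N_gt1 //.
  by rewrite (leq_ltn_trans (leq_subr _ _)) ?ltn_predL.
exists (Ordinal lt_c) => j; rewrite simplex_matrixE expn_div_modn ?N_gt1 //.
have le_i : (i <= k.-1)%N by rewrite -ltnS prednK.
have le_j : (j <= k.-1)%N by rewrite -ltnS prednK.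
have -> : ((k.-1 - i == k.-1 - j) = (i == j))%N.
  apply/eqP/eqP => [eq_ij | -> //]; apply/ord_inj.
  by rewrite -(subKn le_i) eq_ij subKn.
by case: eqP => _; rewrite ?rho1 ?rho0.
Qed.

Lemma simplex_code_rank_le k : (code_rank (simplex_code gamma q s T k) <= k)%N.
Proof.
apply/code_rank_le/free_cover_span/mulmx_unit_columns_eq0.
exact: simplex_matrix_unit_column.
Qed.

Lemma simplex_code_min_dist_le k : (0 < k)%N ->
  (min_dist (simplex_code gamma q s T k) <= q ^ (s * k) - q ^ (s * k) %/ q)%N.
Proof.
move=> k_gt0; have lt_k : (k.-1 < k)%N by rewrite ltn_predL.
pose i0 := Ordinal lt_k.
pose v := gamma ^+ s.-1 *: row i0 (G k).
have vE c : v 0 c = nth 0 T (c %% q) * gamma ^+ s.-1.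
  rewrite 2!mxE simplex_matrixE subnn divn1 mul_exp_pred_rho modn_dvdm //.
  by rewrite -(prednK s_gt0) expnS dvdn_mulr.
have v_in : v \in simplex_code gamma q s T k.
  rewrite inE; apply/existsP; exists (gamma ^+ s.-1 *: delta_mx 0 i0).
  by rewrite -scalemxAl -rowE.
have zero_in : 0 \in simplex_code gamma q s T k.
  by rewrite inE; apply/existsP; exists 0; rewrite mul0mx.
have lt_1n : (1 < q ^ (s * k))%N.
  by rewrite expnM (leq_ltn_trans k_gt0) // ltn_expl // N_gt1.
have v_neq0 : 0 != v.
  apply/eqP => /(congr1 (fun w : 'rV_ _ => w 0 (Ordinal lt_1n))).
  rewrite vE mxE modn_small // T1 mul1r => /esym/eqP.
  by rewrite (negbTE gamma_pred_s).
apply: leq_trans (min_dist_le v_in zero_in v_neq0) _.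
apply: hamming_dist0_le (ltnW q_gt1) _ => c /eqP q_dvd_c.
by rewrite vE q_dvd_c T0 mul0r.
Qed.
End SimplexCode.

Theorem proposition3p28 (R : finComUnitRingType) (gamma : R) (s q : nat)
    (T : seq R) (k : nat) :
  is_chain_ring R ->
  is_maximal_ideal (gen_ideal gamma) ->
  nilpotency_index gamma s ->
  coset_representatives gamma q T ->
  nth 0 T 0 = 0 -> nth 0 T 1 = 1 ->
  (1 <= k)%N ->
  let C := simplex_code gamma q s T k in
  (\sum_(i < code_rank C) ((min_dist C + q ^ i - 1) %/ q ^ i) < q ^ (s * k))%N.
Proof.
move=> _ _ [gamma_s gamma_neq0] [size_T _] T0 T1 k_gt0 /=.
have s_gt0 : (0 < s)%N.
  by case: s gamma_s {gamma_neq0} => // /eqP; rewrite expr0 oner_eq0.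
have q_gt1 : (1 < q)%N.
  rewrite ltnNge; apply/negP => le_q1.
  by move: T1; rewrite nth_default ?size_T // => /eqP; rewrite eq_sym oner_eq0.
have gamma_pred_s : gamma ^+ s.-1 != 0 by apply: gamma_neq0; rewrite ltn_predL.
have [e sk_e] : exists e, (s * k = e.+1)%N.
  by exists (s * k).-1; rewrite prednK // muln_gt0 s_gt0.
rewrite [in X in (_ < X)%N]sk_e; apply: griesmer_sum_lt => //.
  rewrite -sk_e (leq_trans (simplex_code_rank_le gamma q_gt1 s_gt0 T0 T1 k)) //.
  by rewrite leq_pmull.
apply: leq_trans
  (simplex_code_min_dist_le q_gt1 s_gt0 gamma_s gamma_pred_s T0 T1 k_gt0) _.
by rewrite sk_e expnSr mulnK ?mulnBr ?muln1 // ltnW.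
Qed.
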